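(* Let $\mathcal A_+,\mathcal A_-\subseteq\mathbb R^n$ be disjoint finite sets such that $(\mathcal A_+,\mathcal A_-)$ is an extended circuit and $\mathcal A_-\neq\varnothing$. Let $\Delta=\operatorname{conv}(\mathcal A_+)$ and, for $b\in\mathcal A_-$, let $\Gamma_{b,\Delta}$ be the unique face of $\Delta$ with $b\in\operatorname{relint}(\Gamma_{b,\Delta})$. If $f\in\mathcal S(\mathcal A_+,\mathcal A_-)$ satisfies $\operatorname{Sing}_{>0}(f)\neq\varnothing$, then $f=\sum_{b\in\mathcal A_-}q_b$ where each $q_b$ is a copositive circuit signomial with signed support $(\mathcal A_+\cap\Gamma_{b,\Delta},\{b\})$; in particular $f$ is SONC.
   Context: A signomial with signed support $(\mathcal B_+,\mathcal B_-)$ (disjoint finite subsets of $\mathbb R^n$) is $f(x)=\sum_{a\in\mathcal B_+}c_ax^a-\sum_{b\in\mathcal B_-}c_bx^b$ on $\mathbb R^n_{>0}$ with all $c_a,c_b>0$; $\mathcal S(\mathcal B_+,\mathcal B_-)$ is the set of these. With $\mathcal B=\mathcal B_+\cup\mathcal B_-$, $(\mathcal B_+,\mathcal B_-)$ is an extended circuit if either $\#\mathcal B=\#\mathcal B_+=1$ or $\operatorname{conv}(\mathcal B)$ is a simplex with vertex set $\mathcal B_+$; it is a circuit if either $\#\mathcal B=\#\mathcal B_+=1$ or it is an extended circuit with $\#\mathcal B_-=1$ and $\mathcal B_-\subseteq\operatorname{relint}(\operatorname{conv}(\mathcal B_+))$. A circuit signomial has circuit signed support. A signomial is SONC if it is a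 finite sum of circuit signomials that are copositive (nonnegative on $\mathbb R^n_{>0}$). $\operatorname{Sing}_{>0}(f)$ is the set of $x\in\mathbb R^n_{>0}$ with $f(x)=x_1\partial_{x_1}f(x)=\dots=x_n\partial_{x_n}f(x)=0$. *)

From HB Require Import structures.
From mathcomp Require Import all_boot all_order all_algebra.
From mathcomp Require Import finmap.
From mathcomp Require Import all_classical all_reals all_analysis.
Set Implicit Arguments. Unset Strict Implicit. Unset Printing Implicit Defensive.
Import Order.TTheory GRing.Theory Num.Theory.
Local Open Scope classical_set_scope.
Local Open Scope ring_scope.

Section Signomials.
Variables (R : realType) (n : nat).
Notation V := 'rV[R]_n.

Definition pos_orthant : set V := [set x | forall i, 0 < x 0 i].

Definition mono (x a : V) : R := \prod_(i < n) (x 0 i) `^ (a 0 i).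

Definition dotv (w x : V) : R := \sum_(i < n) w 0 i * x 0 i.

Definition signomial (Bp Bm : {fset V}) (f : V -> R) : Prop :=
  exists c : V -> R,
    (forall a, a \in (Bp `|` Bm)%fset -> 0 < c a) /\
    forall x, pos_orthant x ->
      f x = \sum_(a <- Bp) c a * mono x a - \sum_(b <- Bm) c b * mono x b.

Definition conv_hull (B : {fset V}) : set V :=
  [set x | exists l : V -> R, (forall a, a \in B -> 0 <= l a) /\
     \sum_(a <- B) l a = 1 /\ x = \sum_(a <- B) l a *: a].

Definition aff_indep (B : {fset V}) : Prop :=
  forall l : V -> R, \sum_(a <- B) l a *: a = 0 -> \sum_(a <- B) l a = 0 ->
    forall a, a \in B -> l a = 0.

Definition aff (S : set V) : set V :=
  [set x | exists m (p : 'I_m -> V) (l : 'I_m -> R), (forall i, S (p i)) /\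
     \sum_(i < m) l i = 1 /\ x = \sum_(i < m) l i *: p i].

Definition relint (S : set V) : set V :=
  [set x | S x /\ exists e : R, 0 < e /\
     forall y, aff S y -> (forall i, `|y 0 i - x 0 i| < e) -> S y].

(* faces of a polytope P (possibly empty, possibly P itself) *)
Definition face (P G : set V) : Prop :=
  exists (w : V) (c : R), (forall x, P x -> dotv w x <= c) /\
    G = [set x | P x /\ dotv w x = c].

Definition simplex_with_vertices (B Bp : {fset V}) : Prop :=
  Bp != fset0 /\ aff_indep Bp /\ conv_hull B = conv_hull Bp.

Definition ext_circuit (Bp Bm : {fset V}) : Prop :=
  (Bp `&` Bm)%fset = fset0 /\
  ((#|` (Bp `|` Bm)%fset| == 1)%N && (#|` Bp| == 1)%N
   \/ simplex_with_vertices (Bp `|` Bm)%fset Bp).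

Definition circuit (Bp Bm : {fset V}) : Prop :=
  (Bp `&` Bm)%fset = fset0 /\
  ((#|` (Bp `|` Bm)%fset| == 1)%N && (#|` Bp| == 1)%N
   \/ (ext_circuit Bp Bm /\ (#|` Bm| == 1)%N /\
       forall b, b \in Bm -> relint (conv_hull Bp) b)).

Definition copositive (f : V -> R) : Prop := forall x, pos_orthant x -> 0 <= f x.

Definition circuit_signomial (Bp Bm : {fset V}) (f : V -> R) : Prop :=
  circuit Bp Bm /\ signomial Bp Bm f.

Definition SONC (f : V -> R) : Prop :=
  exists m (Bps Bms : 'I_m -> {fset V}) (q : 'I_m -> V -> R),
    (forall j, circuit_signomial (Bps j) (Bms j) (q j) /\ copositive (q j)) /\
    forall x, pos_orthant x -> f x = \sum_(j < m) q j x.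

Definition upd (x : V) (i : 'I_n) (t : R) : V :=
  \row_(j < n) (if j == i then t else x 0 j).

Definition xdiff (f : V -> R) (i : 'I_n) (x : V) : R :=
  x 0 i * derive1 (fun t => f (upd x i t)) (x 0 i).

Definition Sing_pos (f : V -> R) : set V :=
  [set x | pos_orthant x /\ f x = 0 /\ forall i, xdiff f i x = 0].

End Signomials.

Definition fsetIs (R : realType) (n : nat) (A : {fset 'rV[R]_n}) (G : set 'rV[R]_n)
  : {fset 'rV[R]_n} := [fset a | a in A & asbool (G a)]%fset.

(* At a point xs of Sing_{>0}(f) put d_a = c_a xs^a.  The equations f(xs) = 0 and
   x_i df/dx_i (xs) = 0 say that sum_{A+} d_a = sum_{A-} d_b and
   sum_{A+} d_a a = sum_{A-} d_b b.  Writing every b in A- in barycentric coordinates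
   lambda_b on the simplex with vertex set A+, affine independence of A+ forces
   d_a = sum_b d_b lambda_{b,a}, hence f = sum_b q_b with
   q_b(x) = d_b (sum_a lambda_{b,a} (x/xs)^a - (x/xs)^b).  In logarithmic coordinates
   q_b >= 0 is Jensen's inequality for exp, and the monomials of q_b with positive
   coefficient, those a with lambda_{b,a} > 0, are exactly the vertices of the face
   Gamma_b containing b in its relative interior. *)

From HB Require Import structures.
From mathcomp Require Import all_boot all_order all_algebra.
From mathcomp Require Import finmap.
From mathcomp Require Import all_classical all_reals all_analysis.
From mathcomp Require Import ring lra.
Import Order.TTheory GRing.Theory Num.Theory.
Import numFieldNormedType.Exports.
Local Open Scope classical_set_scope.
Local Open Scope ring_scope.
Set Implicit Arguments. Unset Strict Implicit. Unset Printing Implicit Defensive.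

Section Signomials.
Variables (R : realType) (n : nat).
Notation V := 'rV[R]_n.

Lemma sum_scale_mxE (T : Type) (s : seq T) (F : T -> R) (v : T -> V) i :
  (\sum_(t <- s) F t *: v t) 0 i = \sum_(t <- s) F t * v t 0 i.
Proof. by rewrite summxE; apply: eq_bigr => t _; rewrite !mxE. Qed.

Lemma dotvC (u v : V) : dotv u v = dotv v u.
Proof. by apply: eq_bigr => i _; rewrite mulrC. Qed.

Lemma dotvBl (u v x : V) : dotv (u - v) x = dotv u x - dotv v x.
Proof. by rewrite /dotv -sumrB; apply: eq_bigr => i _; rewrite !mxE mulrBl. Qed.

Lemma dotvBr (u x y : V) : dotv u (x - y) = dotv u x - dotv u y.
Proof. by rewrite dotvC dotvBl !(dotvC u). Qed.

Lemma dotv_sumZl (s : seq V) (F : V -> R) (x : V) :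
  dotv (\sum_(a <- s) F a *: a) x = \sum_(a <- s) F a * dotv a x.
Proof.
rewrite /dotv; under eq_bigr do rewrite sum_scale_mxE big_distrl.
rewrite exchange_big /=; apply: eq_bigr => a _; rewrite big_distrr /=.
by apply: eq_bigr => i _; rewrite mulrA.
Qed.

Lemma dotv_sumZr (s : seq V) (F : V -> R) (u : V) :
  dotv u (\sum_(a <- s) F a *: a) = \sum_(a <- s) F a * dotv u a.
Proof. by rewrite dotvC dotv_sumZl; apply: eq_bigr => a _; rewrite dotvC. Qed.

Lemma dotv_affine (s : seq V) (F : V -> R) (u : V) k : \sum_(a <- s) F a = 1 ->
  dotv u (\sum_(a <- s) F a *: a) + k = \sum_(a <- s) F a * (dotv u a + k).
Proof.
move=> F1; rewrite dotv_sumZr -[k in LHS]mul1r -F1 big_distrl -big_split /=.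
by apply: eq_bigr => a _; rewrite mulrDr.
Qed.

Lemma dotv_bound (u z : V) e : (forall j, `|z 0 j| < e) ->
  `|dotv u z| <= (\sum_(j < n) `|u 0 j|) * e.
Proof.
move=> hz; apply: le_trans (ler_norm_sum _ _ _) _.
rewrite big_distrl /=; apply: ler_sum => j _.
by rewrite normrM; apply: ler_wpM2l => //; exact: ltW.
Qed.

Lemma big_fset_supp1 (U : nmodType) (A : {fset V}) a (F : V -> U) : a \in A ->
  (forall x, x \in A -> x != a -> F x = 0) -> \sum_(x <- A) F x = F a.
Proof.
move=> aA F0; rewrite (big_fsetD1 a) //= big1_fset ?addr0 // => x.
by rewrite !inE => /andP[xa xA] _; exact: F0.
Qed.

Lemma psumr_seq_eq0P (T : eqType) (s : seq T) (F : T -> R) :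
  (forall x, x \in s -> 0 <= F x) -> \sum_(x <- s) F x = 0 ->
  forall x, x \in s -> F x = 0.
Proof.
move=> F0 /eqP; rewrite big_seq_cond psumr_eq0 => [/allP Fs x xs|x /andP[xs _]].
  by move/(_ x xs): Fs; rewrite xs => /eqP.
exact: F0.
Qed.

Definition lnv (x : V) : V := \row_i ln (x 0 i).

Lemma mono_expR (x a : V) : pos_orthant x -> mono x a = expR (dotv a (lnv x)).
Proof.
move=> px; rewrite /mono /dotv expR_sum; apply: eq_bigr => i _.
by rewrite /powR gt_eqF ?px // mxE.
Qed.

Lemma mono_gt0 (x a : V) : pos_orthant x -> 0 < mono x a.
Proof. by move=> px; rewrite mono_expR // expR_gt0. Qed.

Lemma jensen_expR (T : eqType) (s : seq T) (l t : T -> R) :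
  (forall a, a \in s -> 0 <= l a) -> \sum_(a <- s) l a = 1 ->
  expR (\sum_(a <- s) l a * t a) <= \sum_(a <- s) l a * expR (t a).
Proof.
move=> l0 l1; set S := \sum_(a <- s) l a * t a.
(* tangent line of [expR] at the mean [S] *)
have tangent (a : T) : a \in s -> l a * (expR S * (1 + (t a - S))) <= l a * expR (t a).
  move=> aS; apply: ler_wpM2l; first exact: l0.
  have -> : expR (t a) = expR S * expR (t a - S) by rewrite -expRD addrC subrK.
  by apply: ler_wpM2l; [exact: expR_ge0 | exact: expR_ge1Dx].
apply: le_trans (_ : \sum_(a <- s) l a * (expR S * (1 + (t a - S))) <= _).
  under eq_bigr do rewrite mulrCA mulrDr mulr1 mulrBr.
  rewrite -big_distrr /= big_split /= sumrB -/S -big_distrl /= l1 mul1r.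
  by rewrite subrr addr0 mulr1.
by rewrite big_seq [X in _ <= X]big_seq; apply: ler_sum => a aS; apply: tangent.
Qed.

Lemma mono_upd (x a : V) i t :
  mono (upd x i t) a = t `^ (a 0 i) * \prod_(j < n | j != i) x 0 j `^ a 0 j.
Proof.
rewrite /mono (bigD1 i) //= mxE eqxx; congr (_ * _).
by apply: eq_bigr => j /negbTE ji; rewrite mxE ji.
Qed.

Lemma upd_id (x : V) i : upd x i (x 0 i) = x.
Proof. by apply/rowP => j; rewrite mxE; case: eqP => // ->. Qed.

Lemma is_derive_sum (T : Type) (s : seq T) (h : T -> R -> R) (dh : T -> R) (t : R) :
  (forall a, is_derive t 1 (h a) (dh a)) ->
  is_derive t 1 (fun t' => \sum_(a <- s) h a t') (\sum_(a <- s) dh a).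
Proof.
move=> hd; elim: s => [|a s IH].
  rewrite big_nil; under [fun _ => _]funext do rewrite big_nil.
  exact: is_derive_cst.
rewrite big_cons; under [fun _ => _]funext do rewrite big_cons.
exact: is_deriveD.
Qed.

Lemma xdiff_signomial (Ap Am : {fset V}) (c f : V -> R) x i :
  (forall y, pos_orthant y ->
     f y = \sum_(a <- Ap) c a * mono y a - \sum_(b <- Am) c b * mono y b) ->
  pos_orthant x ->
  xdiff f i x = \sum_(a <- Ap) c a * (a 0 i * mono x a)
                - \sum_(b <- Am) c b * (b 0 i * mono x b).
Proof.
move=> fE px; have xi_gt0 : 0 < x 0 i := px i.
pose P (a : V) := \prod_(j < n | j != i) x 0 j `^ a 0 j.
pose h (a : V) := (c a * P a) \*: (@powR R ^~ (a 0 i)).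
pose dh (a : V) := (c a * P a) * (a 0 i * x 0 i `^ (a 0 i - 1)).
have hd a : is_derive (x 0 i) 1 (h a) (dh a).
  exact/is_deriveZ/is_derive1_powR.
pose F := (fun t => \sum_(a <- Ap) h a t) - (fun t => \sum_(a <- Am) h a t).
have dF : is_derive (x 0 i) 1 F (\sum_(a <- Ap) dh a - \sum_(a <- Am) dh a).
  by apply: is_deriveB; apply: is_derive_sum.
have fF : \forall t \near x 0 i, f (upd x i t) = F t.
  near=> t; have t_gt0 : 0 < t by near: t; exact: lt_nbhsr.
  rewrite fE => [|j]; last by rewrite mxE; case: eqP.
  rewrite /F; congr (_ - _); apply: eq_bigr => a _;
    by rewrite mono_upd /h /= [t `^ _ * _]mulrC mulrA.
rewrite /xdiff derive1E (near_eq_derive _ fF) derive_val mulrBr !big_distrr /=.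
have xpow r : x 0 i * x 0 i `^ (r - 1) = x 0 i `^ r.
  rewrite mulrC -{2}(powRr1 (ltW xi_gt0)) -powRD; first by rewrite subrK.
  by rewrite (gt_eqF xi_gt0) implybT.
have monox a : mono x a = x 0 i `^ a 0 i * P a.
  by rewrite -{1}(upd_id x i) mono_upd.
congr (_ - _); apply: eq_bigr => a _;
  by rewrite /dh monox -(xpow (a 0 i)); ring.
Unshelve. all: end_near.
Qed.

Lemma Sing_pos_balance (Ap Am : {fset V}) (c f : V -> R) x :
  (forall y, pos_orthant y ->
     f y = \sum_(a <- Ap) c a * mono y a - \sum_(b <- Am) c b * mono y b) ->
  Sing_pos f x ->
  \sum_(a <- Ap) c a * mono x a = \sum_(b <- Am) c b * mono x b /\
  \sum_(a <- Ap) (c a * mono x a) *: a = \sum_(b <- Am) (c b * mono x b) *: b.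
Proof.
move=> fE [px [fx0 dfx0]]; split; first by apply/eqP; rewrite -subr_eq0 -fE // fx0.
apply/rowP => i; rewrite !sum_scale_mxE.
have swap (s : seq V) :
    \sum_(a <- s) c a * (a 0 i * mono x a) = \sum_(a <- s) c a * mono x a * a 0 i.
  by apply: eq_bigr => a _; ring.
by move/eqP: (dfx0 i); rewrite (xdiff_signomial i fE px) !swap subr_eq0 => /eqP.
Qed.

Definition aff_mx (s : seq V) : 'M[R]_(size s, n + 1) :=
  row_mx (\matrix_(i, j) s`_i 0 j) (const_mx 1).

Lemma row_free_aff_mx (A : {fset V}) : aff_indep A -> row_free (aff_mx A).
Proof.
move=> hA; apply: inj_row_free => l.
rewrite mul_mx_row -row_mx0 => /eq_row_mx [l_pts l_one].
pose lam a := \sum_(j < size A | A`_j == a) l 0 j.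
have lamE (i : 'I_(size A)) : lam A`_i = l 0 i.
  by rewrite /lam (big_pred1 i) // => j; rewrite /= nth_uniq ?fset_uniq.
have sumA (U : nmodType) (F : V -> U) : \sum_(a <- A) F a = \sum_(i < size A) F A`_i.
  by rewrite (big_nth 0) big_mkord.
have lam0 : forall a, a \in A -> lam a = 0.
  apply: hA; rewrite sumA; under eq_bigr do rewrite lamE.
    apply/rowP => j; rewrite sum_scale_mxE mxE.
    transitivity ((l *m \matrix_(i, j) A`_i 0 j) 0 j); last by rewrite l_pts mxE.
    by rewrite mxE; apply: eq_bigr => i _; rewrite !mxE.
  transitivity ((l *m (const_mx 1 : 'M[R]_(size A, 1))) 0 0); last by rewrite l_one mxE.
  by rewrite mxE; apply: eq_bigr => i _; rewrite !mxE mulr1.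
by apply/rowP => i; rewrite mxE -lamE lam0 ?mem_nth.
Qed.

Lemma aff_indep_interp (A : {fset V}) : aff_indep A ->
  forall v : V -> R, exists u k, forall a, a \in A -> dotv u a + k = v a.
Proof.
move=> /row_free_aff_mx /row_freeP [B hB] v.
pose z := B *m \col_(i < size A) v A`_i.
have : aff_mx A *m z = \col_i v A`_i by rewrite /z mulmxA hB mul1mx.
rewrite -[z]vsubmxK mul_row_col => hz.
exists (\row_j usubmx z j 0), (dsubmx z 0 0) => a aA.
have ia : (index a A < size A)%N by rewrite index_mem.
have -> : a = A`_(Ordinal ia) by rewrite nth_index.
move: hz => /(congr1 (fun y : 'cV[R]_(size A) => y (Ordinal ia) 0)); rewrite !mxE => <-.
congr (_ + _); last by rewrite big_ord1 !mxE mul1r.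
by apply: eq_bigr => j _; rewrite !mxE mulrC.
Qed.

Lemma aff_indep_coord (A : {fset V}) a : aff_indep A -> a \in A ->
  exists u k, forall mu, \sum_(x <- A) mu x = 1 ->
    dotv u (\sum_(x <- A) mu x *: x) + k = mu a.
Proof.
move=> hA aA; have [u [k huk]] := aff_indep_interp hA (fun x => (x == a)%:R).
exists u, k => mu mu1; rewrite dotv_affine // big_seq.
under eq_bigr => x xA do rewrite huk //.
rewrite -big_seq (big_fset_supp1 aA) ?eqxx ?mulr1 // => x _ /negbTE ->.
by rewrite mulr0.
Qed.

Lemma aff_indep_eq_coord (A : {fset V}) (mu nu : V -> R) : aff_indep A ->
  \sum_(a <- A) mu a = \sum_(a <- A) nu a ->
  \sum_(a <- A) mu a *: a = \sum_(a <- A) nu a *: a ->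
  forall a, a \in A -> mu a = nu a.
Proof.
move=> hA h1 h2 a aA; apply/eqP; rewrite -subr_eq0; apply/eqP.
apply: (hA (fun a => mu a - nu a)) => //; last by rewrite sumrB h1 subrr.
by under eq_bigr do rewrite scalerBl; rewrite sumrB h2 subrr.
Qed.

Lemma aff_indep_subset (A B : {fset V}) : (B `<=` A)%fset -> aff_indep A -> aff_indep B.
Proof.
move=> BA hA l l_pts l1 a aB.
pose l' x := if x \in B then l x else 0.
have /= := hA l' _ _ a (fsubsetP BA a aB); rewrite /l' aB; apply.
  rewrite -(big_fset_incl _ BA) => [|x _ /negbTE ->]; last by rewrite scale0r.
  by rewrite -[RHS]l_pts; apply: eq_big_seq => x ->.
rewrite -(big_fset_incl _ BA) => [|x _ /negbTE ->] //.
by rewrite -[RHS]l1; apply: eq_big_seq => x ->.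
Qed.

Lemma aff_indep_balance (A B : {fset V}) (d : V -> R) (lam : V -> V -> R) :
  aff_indep A ->
  (forall b, b \in B -> \sum_(a <- A) lam b a = 1 /\ b = \sum_(a <- A) lam b a *: a) ->
  \sum_(a <- A) d a = \sum_(b <- B) d b ->
  \sum_(a <- A) d a *: a = \sum_(b <- B) d b *: b ->
  forall a, a \in A -> d a = \sum_(b <- B) d b * lam b a.
Proof.
move=> hA hlam bal0 bal1; apply: aff_indep_eq_coord => //.
  rewrite bal0 exchange_big /=; apply: eq_big_seq => b /hlam[lam1 _].
  by rewrite -mulr_sumr lam1 mulr1.
rewrite bal1; under [RHS]eq_bigr do rewrite scaler_suml.
rewrite exchange_big /=; apply: eq_big_seq => b /hlam[_ bE].
by rewrite [X in _ *: X]bE scaler_sumr; apply: eq_bigr => a _; rewrite scalerA.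
Qed.

Definition barycentric (A : {fset V}) (l : V -> R) (x : V) : Prop :=
  (forall a, a \in A -> 0 <= l a) /\ \sum_(a <- A) l a = 1 /\ x = \sum_(a <- A) l a *: a.

Lemma in_fsetIs (A : {fset V}) (G : set V) a :
  (a \in fsetIs A G) = (a \in A) && `[< G a >].
Proof. by rewrite /fsetIs !inE. Qed.

Lemma fsetIs_sub (A : {fset V}) (G : set V) : (fsetIs A G `<=` A)%fset.
Proof. by apply/fsubsetP => x; rewrite in_fsetIs => /andP[]. Qed.

Lemma conv_hull_mem (A : {fset V}) a : a \in A -> conv_hull A a.
Proof.
move=> aA; exists (fun x => (x == a)%:R); split; first by move=> x _; exact: ler0n.
split; first by rewrite (big_fset_supp1 aA) ?eqxx // => x _ /negbTE ->.
by rewrite (big_fset_supp1 aA) ?eqxx ?scale1r // => x _ /negbTE ->; rewrite scale0r.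
Qed.

Lemma conv_hull0 (x : V) : ~ conv_hull fset0 x.
Proof. by case=> l [_ []]; rewrite big_seq_fset0 => /esym/eqP; rewrite oner_eq0. Qed.

Lemma conv_hullS (S A : {fset V}) : (S `<=` A)%fset -> conv_hull S `<=` conv_hull A.
Proof.
move=> SA x [l [l0 [l1 xE]]].
pose l' a := if a \in S then l a else 0.
have extend (U : nmodType) (F : V -> U) :
    \sum_(a <- S) F a = \sum_(a <- A) if a \in S then F a else 0.
  rewrite -(big_fset_incl _ SA) => [|a _ /negbTE ->] //.
  by apply: eq_big_seq => a ->.
exists l'; split; first by move=> a _; rewrite /l'; case: ifP => // /l0.
rewrite -l1 xE !extend; split; apply: eq_bigr => a _; rewrite /l'.
  by case: ifP.
by case: ifP => // _; rewrite scale0r.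
Qed.

Lemma conv_hull_supp (S A : {fset V}) mu x : (S `<=` A)%fset -> barycentric A mu x ->
  (forall a, a \in A -> a \notin S -> mu a = 0) -> conv_hull S x.
Proof.
move=> SA [mu0 [mu1 xE]] mu_out; exists mu; split.
  by move=> a /(fsubsetP SA); exact: mu0.
split; first by rewrite (big_fset_incl _ SA).
by rewrite xE (big_fset_incl _ SA) // => a aA /(mu_out a aA) ->; rewrite scale0r.
Qed.

Lemma conv_hull_add_point (A : {fset V}) b : b \notin A -> conv_hull A b ->
  conv_hull (A `|` [fset b])%fset = conv_hull A.
Proof.
move=> bA [lam [l0 [l1 bE]]]; apply/seteqP; split; last exact/conv_hullS/fsubsetUl.
rewrite fsetUC => x [mu [mu0 [mu1 xE]]].
rewrite big_fsetU1 // in mu1; rewrite big_fsetU1 // in xE.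
have mub : 0 <= mu b by apply: mu0; rewrite !inE eqxx.
exists (fun a => mu a + mu b * lam a); split.
  move=> a aA; apply: addr_ge0; first by apply: mu0; rewrite !inE aA orbT.
  by apply: mulr_ge0 => //; exact: l0.
split; first by rewrite big_split /= -mulr_sumr l1 mulr1 addrC.
rewrite xE [X in mu b *: X]bE scaler_sumr -big_split /=; apply: eq_bigr => a _.
by rewrite scalerDl scalerA addrC.
Qed.

Lemma hyperplane_supp (A : {fset V}) w c mu x :
  (forall y, conv_hull A y -> dotv w y <= c) -> barycentric A mu x -> dotv w x = c ->
  forall a, a \in A -> 0 < mu a -> dotv w a = c.
Proof.
move=> hwc [mu0 [mu1 xE]] wx a aA mu_gt0.
have slack_ge0 a' : a' \in A -> 0 <= mu a' * (c - dotv w a').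
  move=> a'A; rewrite mulr_ge0 ?mu0 // subr_ge0.
  by apply: hwc; exact: conv_hull_mem.
have slack0 : \sum_(a' <- A) mu a' * (c - dotv w a') = 0.
  under eq_bigr do rewrite mulrBr.
  by rewrite sumrB -big_distrl /= mu1 mul1r -dotv_sumZr -xE wx subrr.
have /eqP := psumr_seq_eq0P slack_ge0 slack0 aA.
by rewrite mulf_eq0 (gt_eqF mu_gt0) subr_eq0 => /eqP.
Qed.

Lemma conv_hull_face (A : {fset V}) (G : set V) :
  face (conv_hull A) G -> conv_hull (fsetIs A G) = G.
Proof.
move=> [w [c [hwc GE]]]; have sub := fsetIs_sub A G.
apply/seteqP; split => x.
  move=> hx; have [l [l0 [l1 xE]]] := hx; rewrite GE; split.
    exact: conv_hullS sub _ hx.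
  rewrite xE dotv_sumZr -[RHS]mul1r -l1 big_distrl /=; apply: eq_big_seq => a.
  by rewrite in_fsetIs GE => /andP[_ /asboolP [_ ->]].
rewrite {1}GE => -[[mu hmu] hx]; apply: (conv_hull_supp sub hmu) => a aA.
rewrite in_fsetIs aA /= => /asboolPn nGa; apply/eqP; rewrite eq_le hmu.1 // andbT leNgt.
apply/negP => mu_gt0; apply: nGa; rewrite GE; split; first exact: conv_hull_mem.
exact: hyperplane_supp hwc hmu hx a aA mu_gt0.
Qed.

Lemma face_conv_hull_subset (S A : {fset V}) : aff_indep A -> (S `<=` A)%fset ->
  face (conv_hull A) (conv_hull S).
Proof.
move=> hA SA.
have [u [k huk]] := aff_indep_interp hA (fun a => if a \in S then 0 else -1).
have dotv_out (mu : V -> R) : \sum_(a <- A) mu a = 1 ->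
    dotv u (\sum_(a <- A) mu a *: a) + k =
    - \sum_(a <- A) mu a * (if a \in S then 0 else 1).
  move=> mu1; rewrite dotv_affine // -sumrN; apply: eq_big_seq => a aA.
  by rewrite huk //; case: ifP; rewrite ?mulr0 ?oppr0 // mulrN.
have out_ge0 (mu : V -> R) : (forall a, a \in A -> 0 <= mu a) ->
    forall a, a \in A -> 0 <= mu a * (if a \in S then 0 else 1).
  by move=> mu0 a aA; rewrite mulr_ge0 ?mu0 //; case: ifP.
exists u, (- k); split.
  move=> _ [mu [mu0 [mu1 ->]]]; have := dotv_out mu mu1.
  have : 0 <= \sum_(a <- A) mu a * (if a \in S then 0 else 1).
    by rewrite big_seq sumr_ge0 // => a; exact: out_ge0.
  lra.
apply/seteqP; split => x.
  move=> hx; split; first exact: conv_hullS SA _ hx.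
  have [mu [_ [mu1 xE]]] := hx; suff : dotv u x + k = 0 by lra.
  rewrite xE dotv_affine // big_seq big1 // => a aS.
  by rewrite huk ?(fsubsetP SA) // aS mulr0.
case=> [[mu hmu] wx]; apply: (conv_hull_supp SA hmu) => a aA aS.
have [mu0 [mu1 xE]] := hmu.
have out0 : \sum_(a <- A) mu a * (if a \in S then 0 else 1) = 0.
  by apply/eqP; rewrite -oppr_eq0 -dotv_out // -xE wx addNr.
have := psumr_seq_eq0P (out_ge0 mu mu0) out0 aA.
by rewrite (negbTE aS) mulr1.
Qed.

Lemma aff_conv_hull (S : {fset V}) y : aff (conv_hull S) y ->
  exists nu, \sum_(a <- S) nu a = 1 /\ y = \sum_(a <- S) nu a *: a.
Proof.
case=> m [p [l [Sp [l1 ->]]]].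
have /choice [mus hmus] : forall i, exists mu, barycentric S mu (p i) by [].
exists (fun a => \sum_(i < m) l i * mus i a); split.
  rewrite exchange_big /= -l1; apply: eq_bigr => i _.
  by rewrite -mulr_sumr (hmus i).2.1 mulr1.
under [RHS]eq_bigr do rewrite scaler_suml.
rewrite exchange_big /=; apply: eq_bigr => i _.
rewrite [in LHS](hmus i).2.2 scaler_sumr; apply: eq_bigr => a _.
by rewrite scalerA.
Qed.

Lemma relint_conv_hull (S : {fset V}) (lam : V -> R) b : aff_indep S ->
  (forall a, a \in S -> 0 < lam a) -> \sum_(a <- S) lam a = 1 ->
  b = \sum_(a <- S) lam a *: a -> relint (conv_hull S) b.
Proof.
move=> hS lam_gt0 lam1 bE.
have /choice [uk huk] : forall a, exists p : V * R, a \in S -> forall mu,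
    \sum_(x <- S) mu x = 1 -> dotv p.1 (\sum_(x <- S) mu x *: x) + p.2 = mu a.
  move=> a; case: (boolP (a \in S)) => aS; last by exists (0, 0).
  by have [u [k h]] := aff_indep_coord hS aS; exists (u, k).
pose N a := \sum_(j < n) `|(uk a).1 0 j|.
have N_ge0 a : 0 <= N a by apply: sumr_ge0.
(* Small enough that no barycentric coordinate, an affine function of the point,
   changes sign on the [e]-box around [b]. *)
pose e := \big[Order.min/1]_(a <- S) (lam a / (1 + N a)).
have e_gt0 : 0 < e.
  rewrite /e big_seq; elim/big_ind: _ => [|x y x_gt0 y_gt0|a aS]; first exact: ltr01.
    by rewrite lt_min x_gt0 y_gt0.
  by rewrite divr_gt0 ?lam_gt0 //; have := N_ge0 a; lra.
split; first by exists lam; split => // a /lam_gt0 /ltW.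
exists e; split => // y hy near_y; have [nu [nu1 yE]] := aff_conv_hull hy.
exists nu; split; last by split.
move=> a aS.
have coord_shift : nu a - lam a = dotv (uk a).1 (y - b).
  rewrite dotvBr -[nu a](huk a aS nu nu1) -[lam a](huk a aS lam lam1) -yE -bE.
  lra.
have : `|dotv (uk a).1 (y - b)| <= N a * e.
  by apply: dotv_bound => j; rewrite !mxE; exact: near_y.
rewrite ler_norml => /andP[dist _].
have : e <= lam a / (1 + N a) by apply: ge_bigmin_seq.
rewrite ler_pdivlMr; last by have := N_ge0 a; lra.
have := N_ge0 a; nra.
Qed.

Lemma exists_face_relint (A : {fset V}) lam b : aff_indep A -> barycentric A lam b ->
  exists G, face (conv_hull A) G /\ relint G b.
Proof.
move=> hA [lam0 [lam1 bE]].
pose S := fsetIs A [set a | 0 < lam a].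
have SA : (S `<=` A)%fset := fsetIs_sub A _.
have lam_out a : a \in A -> a \notin S -> lam a = 0.
  move=> aA; rewrite in_fsetIs aA /= => /asboolPn /negP; rewrite -leNgt => lam_le0.
  by apply/eqP; rewrite eq_le lam_le0 lam0.
exists (conv_hull S); split; first exact: face_conv_hull_subset.
apply: (relint_conv_hull (lam := lam) (aff_indep_subset SA hA)).
- by move=> a; rewrite in_fsetIs => /andP[_ /asboolP].
- by rewrite (big_fset_incl _ SA).
- by rewrite (big_fset_incl _ SA) // => a aA /(lam_out a aA) ->; rewrite scale0r.
Qed.

Lemma relint_extend (G : set V) a b : relint G b -> G a ->
  exists2 eps : R, 0 < eps & G ((1 + eps) *: b - eps *: a).
Proof.
case=> Gb [e [e_gt0 he]] Ga.
pose D := \sum_(j < n) `|b 0 j - a 0 j|.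
have D_ge0 : 0 <= D by apply: sumr_ge0.
pose eps := e / (D + 1).
have eps_gt0 : 0 < eps by rewrite divr_gt0 //; lra.
have epsD : eps * (D + 1) = e by rewrite divfK // gt_eqF //; lra.
exists eps => //; apply: he.
  exists 2%N, (fun i : 'I_2 => if i == ord0 then b else a),
    (fun i : 'I_2 => if i == ord0 then 1 + eps else - eps).
  split; first by move=> i; case: ifP.
  split; first by rewrite !big_ord_recl big_ord0 /= addr0 addrK.
  by rewrite !big_ord_recl big_ord0 /= addr0 scaleNr.
move=> j; rewrite !mxE.
have -> : (1 + eps) * b 0 j - eps * a 0 j - b 0 j = eps * (b 0 j - a 0 j) by ring.
rewrite normrM gtr0_norm //.
have : `|b 0 j - a 0 j| <= D by rewrite /D (bigD1 j) //= lerDl sumr_ge0.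
move=> /(ler_wpM2l (ltW eps_gt0)); lra.
Qed.

Lemma face_relint_supp (A : {fset V}) lam b (G : set V) :
  aff_indep A -> barycentric A lam b -> face (conv_hull A) G -> relint G b ->
  forall a, a \in A -> G a <-> 0 < lam a.
Proof.
move=> hA hlam [w [c [hwc GE]]] hb a aA; have [lam0 [lam1 bE]] := hlam.
split => [Ga|lam_gt0]; last first.
  rewrite GE; split; first exact: conv_hull_mem.
  by move: hb.1; rewrite GE => -[_ wb]; exact: hyperplane_supp hwc hlam wb a aA lam_gt0.
have [eps eps_gt0] := relint_extend hb Ga.
rewrite GE => -[[mu [mu0 [mu1 yE]]] _].
pose nu x := (1 + eps) * lam x - eps * (x == a)%:R.
have coord_a : nu a = mu a.
  apply: (aff_indep_eq_coord hA _ _ aA); rewrite /nu.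
    rewrite sumrB -!mulr_sumr lam1 mu1 (big_fset_supp1 aA) ?eqxx.
      by rewrite !mulr1 addrK.
    by move=> x _ /negbTE ->; rewrite mulr0n.
  rewrite -yE; under eq_bigr do rewrite scalerBl -!scalerA.
  rewrite sumrB -!scaler_sumr -bE (big_fset_supp1 aA) ?eqxx ?scale1r ?scalerA //.
  by move=> x _ /negbTE ->; rewrite scale0r.
rewrite lt_def lam0 // andbT; apply/eqP => lam_a0.
have := mu0 a aA; rewrite -coord_a /nu eqxx lam_a0 mulr0 mulr1; lra.
Qed.

Lemma circuit_face (A : {fset V}) (G : set V) b : aff_indep A ->
  face (conv_hull A) G -> relint G b -> b \notin A ->
  circuit (fsetIs A G) [fset b]%fset.
Proof.
move=> hA hG hb bA; have GE := conv_hull_face hG.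
have bS : b \notin fsetIs A G by rewrite in_fsetIs (negbTE bA).
have disj : (fsetIs A G `&` [fset b])%fset = fset0.
  apply/fsetP => x; rewrite in_fsetI in_fset1 inE.
  by apply/negbTE/negP => /andP[xS /eqP xb]; move: xS; rewrite xb (negbTE bS).
split=> //; right; split; last split.
- split=> //; right; split.
    by apply/negP => /eqP S0; apply: (@conv_hull0 b); rewrite -S0 GE; exact: hb.1.
  split; first exact: aff_indep_subset (fsetIs_sub A G) hA.
  by apply: conv_hull_add_point bS _; rewrite GE; exact: hb.1.
- by rewrite cardfs1.
- by move=> x; rewrite in_fset1 => /eqP ->; rewrite GE.
Qed.

Definition circuit_term (Ap : {fset V}) (c : V -> R) (xs : V) (l : V -> R) (b x : V) : R :=
  \sum_(a <- Ap) (c b * mono xs b * l a / mono xs a) * mono x a - c b * mono x b.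

Lemma circuit_term_ge0 (Ap : {fset V}) c xs l b x :
  pos_orthant xs -> pos_orthant x -> 0 <= c b -> barycentric Ap l b ->
  0 <= circuit_term Ap c xs l b x.
Proof.
move=> pxs px cb [l0 [l1 bE]]; pose D := lnv x - lnv xs.
have monoD a : mono x a = mono xs a * expR (dotv a D).
  by rewrite !mono_expR // /D dotvBr expRB mulrC divfK // gt_eqF ?expR_gt0.
rewrite /circuit_term monoD.
under eq_bigr do rewrite monoD mulrA divfK ?gt_eqF ?mono_gt0 // -mulrA.
rewrite -mulr_sumr mulrA -mulrBr; apply: mulr_ge0.
  by rewrite mulr_ge0 // ltW ?mono_gt0.
by rewrite subr_ge0 {1}bE dotv_sumZl; exact: jensen_expR.
Qed.

Lemma circuit_term_signomial (Ap : {fset V}) c xs l b (G : set V) :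
  aff_indep Ap -> barycentric Ap l b -> face (conv_hull Ap) G -> relint G b ->
  b \notin Ap -> pos_orthant xs -> 0 < c b ->
  signomial (fsetIs Ap G) [fset b]%fset (circuit_term Ap c xs l b).
Proof.
move=> hA hl hG hb bA pxs cb; have supp := face_relint_supp hA hl hG hb.
have neq_b a : a \in Ap -> (a == b) = false.
  by move=> aA; apply/negbTE; apply: contraNneq bA => <-.
have l_out a : a \in Ap -> ~~ `[< G a >] -> l a = 0.
  move=> aA /asboolPn nGa; apply/eqP; rewrite eq_le hl.1 // andbT leNgt.
  by apply/negP => /(supp a aA).2.
exists (fun a => if a == b then c b else c b * mono xs b * l a / mono xs a); split.
  move=> a; rewrite in_fsetU in_fset1 => /orP[|/eqP ->]; last by rewrite eqxx.
  rewrite in_fsetIs => /andP[aA /asboolP Ga]; rewrite neq_b //.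
  by rewrite !mulr_gt0 ?invr_gt0 ?mono_gt0 //; exact/(supp a aA).
move=> x px; rewrite /circuit_term big_seq_fset1 eqxx; congr (_ - _).
rewrite (big_fset_incl _ (fsetIs_sub Ap G)) => [|a aA]; last first.
  by rewrite in_fsetIs aA /= => /(l_out a aA) l0; rewrite neq_b // l0 mulr0 !mul0r.
by apply: eq_big_seq => a aA; rewrite neq_b.
Qed.

Lemma circuit_term_copositive_circuit (Ap : {fset V}) c xs l b (G : set V) :
  aff_indep Ap -> barycentric Ap l b -> face (conv_hull Ap) G -> relint G b ->
  b \notin Ap -> pos_orthant xs -> 0 < c b ->
  circuit_signomial (fsetIs Ap G) [fset b]%fset (circuit_term Ap c xs l b) /\
  copositive (circuit_term Ap c xs l b).
Proof.
move=> hA hl hG hb bA pxs cb; split; first split.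
- exact: circuit_face.
- exact: circuit_term_signomial.
- by move=> x px; exact: circuit_term_ge0 (ltW cb) hl.
Qed.

Lemma sum_circuit_term (Ap Am : {fset V}) c xs (lam : V -> V -> R) x :
  pos_orthant xs ->
  (forall a, a \in Ap -> c a * mono xs a = \sum_(b <- Am) c b * mono xs b * lam b a) ->
  \sum_(a <- Ap) c a * mono x a - \sum_(b <- Am) c b * mono x b =
  \sum_(b <- Am) circuit_term Ap c xs (lam b) b x.
Proof.
move=> pxs coef; rewrite /circuit_term sumrB; congr (_ - _).
rewrite [RHS]exchange_big /=; apply: eq_big_seq => a aA.
by rewrite -mulr_suml -mulr_suml -coef // mulfK ?gt_eqF ?mono_gt0.
Qed.

Lemma SONC_big (T : eqType) (s : seq T) (Bp Bm : T -> {fset V}) (q : T -> V -> R)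
    (f : V -> R) :
  (forall t, t \in s -> circuit_signomial (Bp t) (Bm t) (q t) /\ copositive (q t)) ->
  (forall x, pos_orthant x -> f x = \sum_(t <- s) q t x) -> SONC f.
Proof.
move=> hq fE; pose r := tnth (in_tuple s).
exists (size s), (Bp \o r), (Bm \o r), (q \o r); split.
  by move=> j; apply: hq; exact: mem_tnth.
by move=> x px; rewrite fE // big_tnth.
Qed.

Lemma ext_circuit_simplex (Ap Am : {fset V}) : ext_circuit Ap Am -> Am != fset0 ->
  simplex_with_vertices (Ap `|` Am)%fset Ap.
Proof.
move=> [disj [/andP[/eqP cardU /eqP cardp] | //]] Am0.
have := cardfsUI Ap Am; rewrite cardU cardp disj cardfs0 addn0.
move=> /(congr1 (fun k => (k - 1)%N)); rewrite /= addKn subnn => /esym/eqP.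
by rewrite cardfs_eq0 (negbTE Am0).
Qed.

Lemma exists_barycentric (A B : {fset V}) : conv_hull (A `|` B)%fset = conv_hull A ->
  exists lam : V -> V -> R, forall b, b \in B -> barycentric A (lam b) b.
Proof.
move=> conv_eq.
suff /choice [lam hlam] : forall b, exists l, b \in B -> barycentric A l b.
  by exists lam.
move=> b; case: (boolP (b \in B)) => bB; last by exists (fun=> 0).
have [l hl] : conv_hull A b.
  by rewrite -conv_eq; apply: conv_hull_mem; rewrite in_fsetU bB orbT.
by exists l.
Qed.

End Signomials.

Unset Implicit Arguments. Set Strict Implicit. Set Printing Implicit Defensive.
Theorem proposition3p10 (R : realType) (n : nat) (Ap Am : {fset 'rV[R]_n})
  (f : 'rV[R]_n -> R) :
  ext_circuit Ap Am -> Am != fset0 ->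
  signomial Ap Am f -> Sing_pos f !=set0 ->
  (exists q : 'rV[R]_n -> 'rV[R]_n -> R,
     (forall b, b \in Am ->
        (exists G : set 'rV[R]_n, face (conv_hull Ap) G /\ relint G b) /\
        forall G : set 'rV[R]_n, face (conv_hull Ap) G -> relint G b ->
          circuit_signomial (fsetIs Ap G) [fset b]%fset (q b)
          /\ copositive (q b)) /\
     forall x, pos_orthant x -> f x = \sum_(b <- Am) q b x)
  /\ SONC f.
Proof.
move=> hAB Am0 [c [c_gt0 fE]] [xs sing]; have [pxs _] := sing.
have [_ [hA /exists_barycentric [lam hlam]]] := ext_circuit_simplex hAB Am0.
have bA b : b \in Am -> b \notin Ap.
  move=> bAm; apply/negP => bAp; move/fsetP/(_ b): hAB.1.
  by rewrite in_fsetI bAp bAm inE.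
have [bal0 bal1] := Sing_pos_balance fE sing.
have coef := aff_indep_balance hA (fun b bAm => (hlam b bAm).2) bal0 bal1.
pose q b := circuit_term Ap c xs (lam b) b.
have q_circuit b : b \in Am -> forall G, face (conv_hull Ap) G -> relint G b ->
    circuit_signomial (fsetIs Ap G) [fset b]%fset (q b) /\ copositive (q b).
  move=> bAm G hG hb; have cb : 0 < c b by apply: c_gt0; rewrite in_fsetU bAm orbT.
  exact: circuit_term_copositive_circuit hA (hlam b bAm) hG hb (bA b bAm) pxs cb.
have /choice [Gs hGs] : forall b, exists G, b \in Am -> face (conv_hull Ap) G /\ relint G b.
  move=> b; case: (boolP (b \in Am)) => bAm; last by exists set0.
  by have [G hG] := exists_face_relint hA (hlam b bAm); exists G.
have fq x : pos_orthant x -> f x = \sum_(b <- Am) q b x.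
  by move=> px; rewrite fE // (sum_circuit_term _ pxs coef).
split.
  by exists q; split => // b bAm; split; [exists (Gs b); exact: hGs | exact: q_circuit].
apply: (SONC_big (Bp := fun b => fsetIs Ap (Gs b)) (Bm := fun b => [fset b]%fset)) fq.
by move=> b bAm; have [hG hb] := hGs b bAm; exact: q_circuit.
Qed.
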